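(* Let $\mathcal{X},\mathcal{Y}$ be finite, $p(X,Y)\in\Delta_{\mathcal{X}\times\mathcal{Y}}$ with $p(X)$ of full support, $\Lambda:=I(X;Y)$. For every $0\le\lambda\le\Lambda$, every $q(T|X)\in\mathrm{IB}(\lambda)$ factorises as $q(T|X)=\bar q\circ\pi_{\mathcal{X}}$, i.e. $q(t|x)=\bar q(t|\pi_{\mathcal{X}}(x))$ for all $x,t$.
   Context: $\mathcal{T}=\mathbb{N}$. For $q(T|X)\in C(\mathcal{X},\mathcal{T})$ the joint is $q(x,y,t)=p(x,y)q(t|x)$. $\mathrm{IB}(\lambda):=\operatorname{argmin}\{I_q(X;T): q(T|X)\in C(\mathcal{X},\mathcal{T}),\ I_q(T;Y)\ge\lambda\}$. The relation $x\sim_{\mathcal{X}}x'\iff p(Y|x)=p(Y|x')$ has partition $\bar{\mathcal{X}}=\{\mathcal{X}_j\}_j$ and projection $\pi_{\mathcal{X}}$; $\bar q(t|\mathcal{X}_j):=\frac{\sum_{x\in\mathcal{X}_j}q(t|x)p(x)}{p(\mathcal{X}_j)}$. *)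

From HB Require Import structures.
From mathcomp Require Import all_boot all_order all_algebra.
From mathcomp Require Import all_classical all_reals all_analysis.
Set Implicit Arguments. Unset Strict Implicit. Unset Printing Implicit Defensive.
Import Order.TTheory GRing.Theory Num.Theory.
Local Open Scope ring_scope.
Local Open Scope classical_set_scope.

(* Information bottleneck setting.  X, Y finite types, T = nat.
   A joint distribution is p : X -> Y -> R; a channel q(t|x) is q : nat -> X -> R. *)

Section IB.
Variables (R : realType) (X Y : finType).

Definition xlogxy (a b : R) : R := if a == 0 then 0 else a * ln (a / b).

Definition is_joint_distr (p : X -> Y -> R) : Prop :=
  (forall x y, 0 <= p x y) /\ \sum_(x : X) \sum_(y : Y) p x y = 1.

Definition pX (p : X -> Y -> R) (x : X) : R := \sum_(y : Y) p x y.
Definition pY (p : X -> Y -> R) (y : Y) : R := \sum_(x : X) p x y.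

Definition mutinfXY (p : X -> Y -> R) : R :=
  \sum_(x : X) \sum_(y : Y) xlogxy (p x y) (pX p x * pY p y).

Definition is_channel (q : nat -> X -> R) : Prop :=
  (forall t x, 0 <= q t x) /\
  (forall x, (fun n : nat => \sum_(t < n) q t x) @ \oo --> (1 : R^o)).

Definition qT (p : X -> Y -> R) (q : nat -> X -> R) (t : nat) : R :=
  \sum_(x : X) pX p x * q t x.
Definition qTY (p : X -> Y -> R) (q : nat -> X -> R) (t : nat) (y : Y) : R :=
  \sum_(x : X) p x y * q t x.

(* I_q(X;T) = sum_t sum_x q(x,t) log (q(x,t) / (p(x) q(t))), as an extended
   real series over t (each t-summand is nonnegative). *)
Definition mutinfXT (p : X -> Y -> R) (q : nat -> X -> R) : \bar R :=
  (\sum_(t <oo) (\sum_(x : X) xlogxy (pX p x * q t x) (pX p x * qT p q t))%:E)%E.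

Definition mutinfTY (p : X -> Y -> R) (q : nat -> X -> R) : \bar R :=
  (\sum_(t <oo) (\sum_(y : Y) xlogxy (qTY p q t y) (qT p q t * pY p y))%:E)%E.

Definition in_IB (p : X -> Y -> R) (lam : R) (q : nat -> X -> R) : Prop :=
  [/\ is_channel q, (lam%:E <= mutinfTY p q)%E &
      forall q' : nat -> X -> R, is_channel q' -> (lam%:E <= mutinfTY p q')%E ->
        (mutinfXT p q <= mutinfXT p q')%E].

Definition pYgX (p : X -> Y -> R) (x : X) (y : Y) : R := p x y / pX p x.

Definition simX (p : X -> Y -> R) (x x' : X) : bool :=
  [forall y, pYgX p x y == pYgX p x' y].

(* the block X_j of x, and \bar q(t | X_j) *)
Definition qbar (p : X -> Y -> R) (q : nat -> X -> R) (t : nat) (x : X) : R :=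
  (\sum_(x' | simX p x' x) q t x' * pX p x') / (\sum_(x' | simX p x' x) pX p x').

End IB.

From HB Require Import structures.
From mathcomp Require Import all_boot all_order all_algebra.
From mathcomp Require Import all_classical all_reals all_analysis.
From mathcomp Require Import ring lra.
Import Order.TTheory GRing.Theory Num.Theory.
Set Implicit Arguments. Unset Strict Implicit. Unset Printing Implicit Defensive.
Local Open Scope ring_scope.
Local Open Scope classical_set_scope.

(** Averaging a channel [q] over each class of [~], weighted by [p(x)], gives
   the channel [qbar]. Since [p(y|x)] is constant on classes, [q(t,y)] and
   [q(t)] do not change, hence neither does [I(T;Y)]. For each [t], the [t]-th
   summand of [I(X;T)] drops by
   [sum_x p(x) (q ln (q / qbar) - (q - qbar)) >= 0] (as [ln u <= u - 1]), which
   vanishes only if [q(t|.) = qbar(t|.)]. Minimality of [q] and finiteness of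
   [I_qbar(X;T)] force every summand to stay the same, so [q = qbar]. *)

Section relative_entropy_term.
Variable R : realType.
Implicit Types a b u : R.

Lemma ln_le_subr1 u : 0 < u -> ln u <= u - 1.
Proof. by move=> u0; have := expR_ge1Dx (ln u); rewrite lnK ?posrE //; lra. Qed.

Lemma ln_ge_subr1_eq1 u : 0 < u -> u - 1 <= ln u -> u = 1.
Proof.
move=> u0 le_u; have [ln0|] := eqVneq (ln u) 0.
  by rewrite -[u]lnK ?posrE // ln0 expR0.
by move=> /expR_gt1Dx; rewrite lnK ?posrE //; lra.
Qed.

Lemma xlogxyE a b : xlogxy a b = a * ln (a / b).
Proof. by rewrite /xlogxy; case: eqP => [->|]; rewrite ?mul0r. Qed.

Lemma xlogxy_mull c a b : 0 < c -> xlogxy (c * a) (c * b) = c * a * ln (a / b).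
Proof. by move=> c0; rewrite xlogxyE invfM mulrACA mulfV ?gt_eqF ?mul1r. Qed.

Lemma rel_entropy_termE a b : 0 < a -> 0 < b ->
  a * ln (a / b) - (a - b) = a * (b / a - 1 - ln (b / a)).
Proof.
move=> a0 b0; rewrite -invf_div lnV ?posrE ?divr_gt0 //.
by field; rewrite gt_eqF.
Qed.

Lemma rel_entropy_term_ge0 a b : 0 <= a -> 0 <= b -> (0 < a -> 0 < b) ->
  0 <= a * ln (a / b) - (a - b).
Proof.
rewrite le_eqVlt => /predU1P[<- b0 _|a0 _ /(_ a0) b0].
  by rewrite mul0r !sub0r opprK.
rewrite rel_entropy_termE // mulr_ge0 ?(ltW a0) // subr_ge0.
by rewrite ln_le_subr1 ?divr_gt0.
Qed.

Lemma rel_entropy_term_eq a b : 0 <= a -> 0 <= b -> (0 < a -> 0 < b) ->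
  a * ln (a / b) - (a - b) <= 0 -> a = b.
Proof.
rewrite le_eqVlt => /predU1P[<- b0 _|a0 _ /(_ a0) b0].
  by rewrite mul0r !sub0r opprK => b_le0; apply/eqP; rewrite eq_le b0 b_le0.
rewrite rel_entropy_termE // pmulr_rle0 // subr_le0.
by move=> /(ln_ge_subr1_eq1 (divr_gt0 b0 a0)) /divr1_eq.
Qed.

End relative_entropy_term.

Section block_average.
Variables (R : realType) (X Y : finType) (p : X -> Y -> R).
Hypothesis pX_gt0 : forall x, 0 < pX p x.
Local Notation sim := (simX p).

Lemma simX_refl x : sim x x.
Proof. exact/forallP. Qed.

Lemma simX_sym x x' : sim x x' -> sim x' x.
Proof. by move=> /forallP xx'; apply/forallP => y; rewrite eq_sym xx'. Qed.

Lemma simX_trans x x' x'' : sim x x' -> sim x' x'' -> sim x x''.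
Proof.
by move=> /forallP xx' /forallP x'x''; apply/forallP => y; rewrite (eqP (xx' y)).
Qed.

Lemma eq_big_simX x x' (F : X -> R) : sim x' x ->
  \sum_(z | sim z x') F z = \sum_(z | sim z x) F z.
Proof.
move=> x'x; apply: eq_bigl => z; apply/idP/idP => [/simX_trans|]; first exact.
by move=> /simX_trans; apply; apply: simX_sym.
Qed.

Definition block_mass x : R := \sum_(x' | sim x' x) pX p x'.

Definition block_avg (h : X -> R) x : R :=
  (\sum_(x' | sim x' x) h x' * pX p x') / block_mass x.

Lemma qbarE (q : nat -> X -> R) t : qbar p q t = block_avg (q t).
Proof. by []. Qed.

Lemma block_mass_gt0 x : 0 < block_mass x.
Proof.
rewrite /block_mass (bigD1 x) ?simX_refl //= ltr_pwDl //.
by apply: sumr_ge0 => x' _; exact: ltW.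
Qed.

Lemma block_avg_simX h x x' : sim x' x -> block_avg h x' = block_avg h x.
Proof. by move=> x'x; rewrite /block_avg /block_mass !(eq_big_simX _ x'x). Qed.

Lemma block_avg_ge0 h x : (forall x, 0 <= h x) -> 0 <= block_avg h x.
Proof.
move=> h_ge0; apply: divr_ge0; last exact: ltW (block_mass_gt0 x).
by apply: sumr_ge0 => x' _; rewrite mulr_ge0 ?(ltW (pX_gt0 x')).
Qed.

Lemma block_avg_gt0 h x : (forall x, 0 <= h x) -> 0 < h x -> 0 < block_avg h x.
Proof.
move=> h_ge0 hx; rewrite divr_gt0 ?block_mass_gt0 // (bigD1 x) ?simX_refl //=.
rewrite ltr_pwDl ?mulr_gt0 //.
by apply: sumr_ge0 => x' _; rewrite mulr_ge0 ?(ltW (pX_gt0 x')).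
Qed.

Lemma sum_block_avg (h F : X -> R) : (forall x x', sim x' x -> F x' = F x) ->
  \sum_x pX p x * F x * block_avg h x = \sum_x pX p x * F x * h x.
Proof.
move=> F_sim.
have inner x' : \sum_(x | sim x' x) pX p x * F x / block_mass x = F x'.
  transitivity (\sum_(x | sim x x') pX p x * (F x' / block_mass x')).
    apply: eq_big => [x|x /simX_sym xx']; first by apply/idP/idP => /simX_sym.
    by rewrite (F_sim _ _ xx') /block_mass (eq_big_simX _ xx') mulrA.
  rewrite -big_distrl /= -/(block_mass x') mulrCA mulfV ?mulr1 //.
  by rewrite gt_eqF ?block_mass_gt0.
transitivity (\sum_x \sum_(x' | sim x' x)
    h x' * pX p x' * (pX p x * F x / block_mass x)).
  by apply: eq_bigr => x _; rewrite -big_distrl /= /block_avg; ring.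
rewrite (exchange_big_dep xpredT) //=; apply: eq_bigr => x' _.
by rewrite -big_distrr /= inner; ring.
Qed.

Variable q : nat -> X -> R.

Lemma qT_qbar t : qT p (qbar p q) t = qT p q t.
Proof.
have := sum_block_avg (q t) (F := fun=> 1) (fun _ _ _ => erefl).
by under [LHS]eq_bigr do rewrite mulr1; under [RHS]eq_bigr do rewrite mulr1.
Qed.

Lemma qTY_qbar t y : qTY p (qbar p q) t y = qTY p q t y.
Proof.
have pE x : p x y = pX p x * pYgX p x y.
  by rewrite /pYgX mulrC divfK ?gt_eqF.
rewrite /qTY; under eq_bigr do rewrite pE; under [RHS]eq_bigr do rewrite pE.
by apply: sum_block_avg => x x' /forallP /(_ y) /eqP.
Qed.

Lemma mutinfTY_qbar : mutinfTY p (qbar p q) = mutinfTY p q.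
Proof.
apply: eq_eseriesr => t _.
by under eq_bigr do rewrite qTY_qbar qT_qbar.
Qed.

Lemma qbar_channel : is_channel q -> is_channel (qbar p q).
Proof.
move=> [q_ge0 q_sum1]; split=> [t x|x]; first exact: block_avg_ge0.
have sumE n : \sum_(t < n) qbar p q t x =
    (\sum_(x' | sim x' x) (\sum_(t < n) q t x') * pX p x') / block_mass x.
  rewrite -big_distrl /= exchange_big /=.
  by congr (_ / _); apply: eq_bigr => x' _; rewrite big_distrl.
rewrite (eq_fun sumE) -[X in _ --> X](@mulfV _ (block_mass x)); last first.
  by rewrite gt_eqF ?block_mass_gt0.
apply: cvgMr_tmp; rewrite /block_mass.
apply: (cvg_big add_continuous) => x' _; rewrite -[X in _ --> X]mul1r.
exact: cvgMr_tmp.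
Qed.

End block_average.

Definition mutinfXT_term (R : realType) (X Y : finType) (p : X -> Y -> R)
    (q : nat -> X -> R) (t : nat) : R :=
  \sum_x xlogxy (pX p x * q t x) (pX p x * qT p q t).

Lemma mutinfXTE (R : realType) (X Y : finType) (p : X -> Y -> R) q :
  mutinfXT p q = (\sum_(t <oo) (mutinfXT_term p q t)%:E)%E.
Proof. by []. Qed.

Section mutinfXT_term_theory.
Variables (R : realType) (X Y : finType) (p : X -> Y -> R).
Hypothesis pX_gt0 : forall x, 0 < pX p x.
Variable q : nat -> X -> R.
Hypothesis q_ge0 : forall t x, 0 <= q t x.

Lemma pXq_le_qT t x : pX p x * q t x <= qT p q t.
Proof.
rewrite /qT (bigD1 x) //= lerDl.
by apply: sumr_ge0 => x' _; rewrite mulr_ge0 ?(ltW (pX_gt0 x')).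
Qed.

Lemma qT_gt0 t x : 0 < q t x -> 0 < qT p q t.
Proof. by move=> qx; apply: lt_le_trans (pXq_le_qT t x); rewrite mulr_gt0. Qed.

Lemma mutinfXT_termE t :
  mutinfXT_term p q t = \sum_x pX p x * q t x * ln (q t x / qT p q t).
Proof. by apply: eq_bigr => x _; rewrite xlogxy_mull. Qed.

Lemma mutinfXT_term_ge0 t : \sum_x pX p x = 1 -> 0 <= mutinfXT_term p q t.
Proof.
move=> pX_sum1.
have zero : \sum_x (pX p x * q t x - pX p x * qT p q t) = 0.
  by rewrite sumrB -big_distrl /= pX_sum1 mul1r subrr.
rewrite -[leLHS]zero; apply: ler_sum => x _; rewrite xlogxyE -subr_ge0.
have qT_ge0 : 0 <= qT p q t.
  exact: le_trans (mulr_ge0 (ltW (pX_gt0 x)) (q_ge0 t x)) (pXq_le_qT t x).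
apply: rel_entropy_term_ge0; rewrite ?mulr_ge0 ?(ltW (pX_gt0 x)) //.
by rewrite pmulr_rgt0 // => /qT_gt0 ?; rewrite mulr_gt0.
Qed.

Lemma mutinfXT_term_le t :
  mutinfXT_term p q t <= \sum_x q t x * (pX p x * `|ln (pX p x)|).
Proof.
rewrite mutinfXT_termE; apply: ler_sum => x _.
have [->|q_neq0] := eqVneq (q t x) 0; first by rewrite mulr0 !mul0r.
have qx : 0 < q t x by rewrite lt_neqAle eq_sym q_neq0 q_ge0.
rewrite mulrCA -mulrA; apply: ler_wpM2l; first exact: ltW.
apply: ler_wpM2l; first exact: ltW.
apply: (@le_trans _ _ (ln (pX p x)^-1)).
  rewrite ler_ln ?posrE ?divr_gt0 ?invr_gt0 ?(qT_gt0 qx) //.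
  by rewrite ler_pdivrMr ?(qT_gt0 qx) // ler_pdivlMl // pXq_le_qT.
by rewrite lnV ?posrE // -normrN ler_norm.
Qed.

Lemma mutinfXT_term_qbarE t : mutinfXT_term p (qbar p q) t =
  \sum_x pX p x * q t x * ln (qbar p q t x / qT p q t).
Proof.
rewrite /mutinfXT_term qT_qbar //; under eq_bigr do rewrite xlogxy_mull //.
transitivity (\sum_x pX p x * ln (qbar p q t x / qT p q t) * block_avg p (q t) x).
  by apply: eq_bigr => x _; rewrite mulrAC.
rewrite sum_block_avg //.
  by apply: eq_bigr => x _; rewrite mulrAC.
by move=> x x' x'x; rewrite !qbarE (block_avg_simX _ x'x).
Qed.

Lemma mutinfXT_term_sub_qbar t :
  mutinfXT_term p q t - mutinfXT_term p (qbar p q) t =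
  \sum_x pX p x * (q t x * ln (q t x / qbar p q t x) - (q t x - qbar p q t x)).
Proof.
have zero : \sum_x (pX p x * q t x - pX p x * qbar p q t x) = 0.
  by have := qT_qbar pX_gt0 q t; rewrite /qT sumrB => ->; rewrite subrr.
rewrite mutinfXT_termE mutinfXT_term_qbarE -sumrB.
rewrite -[LHS]subr0 -[X in _ - X = _]zero -sumrB; apply: eq_bigr => x _.
have [->|q_neq0] := eqVneq (q t x) 0; first by rewrite mulr0 !mul0r; ring.
have qx : 0 < q t x by rewrite lt_neqAle eq_sym q_neq0 q_ge0.
have qTt := qT_gt0 qx.
have qbarx : 0 < qbar p q t x by apply: block_avg_gt0.
have lnE (a b : R) : 0 < a -> 0 < b -> ln (a / b) = ln a - ln b.
  by move=> a0 b0; rewrite ln_div ?posrE.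
by rewrite (lnE _ _ qx qTt) (lnE _ _ qbarx qTt) (lnE _ _ qx qbarx); ring.
Qed.

Lemma mutinfXT_term_qbar_le t :
  mutinfXT_term p (qbar p q) t <= mutinfXT_term p q t.
Proof.
rewrite -subr_ge0 mutinfXT_term_sub_qbar; apply: sumr_ge0 => x _.
apply: mulr_ge0; first exact: ltW.
apply: rel_entropy_term_ge0 => //; first exact: block_avg_ge0.
exact: block_avg_gt0.
Qed.

Lemma mutinfXT_term_qbar_eq t :
  mutinfXT_term p q t <= mutinfXT_term p (qbar p q) t ->
  forall x, q t x = qbar p q t x.
Proof.
rewrite -subr_le0 mutinfXT_term_sub_qbar => le0 x.
set D := fun x => q t x * ln (q t x / qbar p q t x) - (q t x - qbar p q t x).
have D_ge0 x' : 0 <= pX p x' * D x'.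
  apply: mulr_ge0; first exact: ltW.
  apply: rel_entropy_term_ge0 => //; first exact: block_avg_ge0.
  exact: block_avg_gt0.
have /(psumr_eq0P (fun x' _ => D_ge0 x'))/(_ x isT)/eqP : \sum_x pX p x * D x = 0.
  by apply/eqP; rewrite eq_le le0 sumr_ge0.
rewrite mulf_eq0 gt_eqF //= => /eqP Dx.
apply: rel_entropy_term_eq => //; last by rewrite -/(D x) Dx.
  exact: block_avg_ge0.
exact: block_avg_gt0.
Qed.

End mutinfXT_term_theory.

Lemma eseries_EFin (R : realType) (u : nat -> R) (l : R) :
  (fun n => \sum_(t < n) u t) @ \oo --> (l : R^o) ->
  (\sum_(t <oo) (u t)%:E = l%:E)%E.
Proof.
move=> u_cvg.
have -> : (fun n => \sum_(0 <= t < n) (u t)%:E)%E =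
          EFin \o (fun n => \sum_(t < n) u t).
  by apply: funext => n /=; rewrite sumEFin big_mkord.
by rewrite EFin_lim ?(cvg_lim _ u_cvg) //; apply: cvgP u_cvg.
Qed.

Lemma nneseries_eq_of_le (R : realType) (f g : nat -> R) :
  (forall n, 0 <= f n) -> (forall n, f n <= g n) ->
  (\sum_(n <oo) (f n)%:E)%E \is a fin_num ->
  (\sum_(n <oo) (g n)%:E <= \sum_(n <oo) (f n)%:E)%E ->
  forall n, f n = g n.
Proof.
move=> f_ge0 le_fg f_fin le_sum n.
have d_ge0 k : (0 <= (g k - f k)%:E)%E by rewrite lee_fin subr_ge0.
have gE : (\sum_(k <oo) (g k)%:E =
           \sum_(k <oo) (f k)%:E + \sum_(k <oo) (g k - f k)%:E)%E.
  rewrite -nneseriesD; last 2 first.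
  - by move=> k _ _; rewrite lee_fin.
  - by move=> k _ _.
  by apply: eq_eseriesr => k _; rewrite -EFinD addrC subrK.
have : (\sum_(k <oo) (g k - f k)%:E <= 0)%E.
  by rewrite -(leeD2lE _ _ f_fin) adde0 -gE.
rewrite (nneseriesD1 (n := n)) // => le0.
have : ((g n - f n)%:E <= 0)%E.
  by apply: le_trans le0; rewrite leeDl // nneseries_ge0.
rewrite lee_fin subr_le0 => le_gf.
by apply/eqP; rewrite eq_le le_fg le_gf.
Qed.

Lemma mutinfXT_fin_num (R : realType) (X Y : finType) (p : X -> Y -> R)
    (q : nat -> X -> R) : (forall x, 0 < pX p x) -> \sum_x pX p x = 1 ->
  is_channel q -> mutinfXT p q \is a fin_num.
Proof.
move=> pX_gt0 pX_sum1 [q_ge0 q_sum1].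
have term_ge0 t := mutinfXT_term_ge0 pX_gt0 q_ge0 t pX_sum1.
rewrite mutinfXTE ge0_fin_numE; last first.
  by apply: nneseries_ge0 => t _ _; rewrite lee_fin.
set c := fun x => pX p x * `|ln (pX p x)|.
apply: (@le_lt_trans _ _ (\sum_x c x)%:E); last exact: ltry.
apply: (@le_trans _ _ (\sum_(t <oo) (\sum_x q t x * c x)%:E)%E).
  by apply: lee_nneseries => [t _ _|t _]; rewrite lee_fin ?mutinfXT_term_le.
under eq_eseriesr do rewrite -sumEFin.
rewrite nneseries_sum; last first.
  by move=> x t _; rewrite lee_fin !mulr_ge0 ?normr_ge0 ?(ltW (pX_gt0 x)).
rewrite -sumEFin; apply: lee_sum => x _.
have sum_qc : (fun n => \sum_(t < n) q t x * c x) @ \oo --> (c x : R^o).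
  have -> : (fun n => \sum_(t < n) q t x * c x) =
            (fun n => (\sum_(t < n) q t x) * c x).
    by apply/funext => n; rewrite big_distrl.
  by rewrite -[X in _ --> X]mul1r; apply: cvgMr_tmp.
by rewrite (eseries_EFin sum_qc).
Qed.

Theorem proposition1 (R : realType) (X Y : finType) (p : X -> Y -> R)
  (hp : is_joint_distr p) (hfull : forall x : X, 0 < pX p x)
  (lam : R) (hlam0 : 0 <= lam) (hlam1 : lam <= mutinfXY p)
  (q : nat -> X -> R) (hq : in_IB p lam q) :
  forall (x : X) (t : nat), q t x = qbar p q t x.
Proof.
move=> x t.
have pX_sum1 : \sum_x pX p x = 1 by case: hp.
case: hq => q_channel lam_le q_min.
have qbar_ch := qbar_channel hfull q_channel.
have le_XT : (mutinfXT p q <= mutinfXT p (qbar p q))%E.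
  by apply: q_min; rewrite ?mutinfTY_qbar.
have term_eq := nneseries_eq_of_le
  (fun t => mutinfXT_term_ge0 hfull qbar_ch.1 t pX_sum1)
  (mutinfXT_term_qbar_le hfull q_channel.1)
  (mutinfXT_fin_num hfull pX_sum1 qbar_ch) le_XT.
by apply: (mutinfXT_term_qbar_eq hfull q_channel.1); rewrite term_eq.
Qed.
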